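(* Let $P$ be a priority forest on $[n]_0$ with $m$ edges, and let $C$ be a maximal chain of $[\hat0,P]$ with Jordan–Hölder permutation $\lambda$. Then $s_P\circ\lambda$ is an $(m,n)$-parking function with priority forest $P$ and bird's eye permutation $\lambda^{-1}$.
   Context: $[n]=\{1,\dots,n\}$, $[n]_0=\{0,\dots,n\}$. A priority forest on $[n]_0$ is a rooted forest with vertex set $[n]_0$ whose component trees $T_0,T_1,\dots$ are increasing (each non-root vertex has a larger label than its parent) and satisfy: for $j<k$ every label of $T_j$ is smaller than every label of $T_k$. Its shifted parent map $s_P:[n]\to[n]$ is the partial function with $s_P(i)=p(i)+1$ for non-root $i$ with parent $p(i)$. $\Pi(n)$ is the poset of priority forests on $[n]_0$ ordered by inclusion of edge sets, with an extra top element; $\hat0$ is the edgeless forest. For priority forests $Q\lessdot Q'$ (one edge added), $\lambda(Q,Q')$ is the larger endpoint of the edge in $E(Q')\setminus E(Q)$. A maximal chain $\hat0=P_0\lessdot\cdots\lessdot P_m=P$ has Jordan–Hölder permutation $\lambda:[m]\to[n]$, $i\mapsto\lambda(P_{i-1},P_i)$, which is injective; $\lambda^{-1}$ is its partial inverse $[n]\to[m]$. An $(m,n)$-parking function is a map $\pi:[m]\to[n]$ such that when cars $1,\dots,m$ arrive in order to spots $1,\dots,n$ and car $i$ parks at the first empty spot $\ge\pi(i)$, all cars park. Its bird's eye permutation $\omega_\pi:[n]\to[m]$ sends each occupied spot to the car parked there. Its priority forest is the priority forest whose shifted parent map is $\pi\circ\omega_\pi$. *)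

From mathcomp Require Import all_boot.
Set Implicit Arguments. Unset Strict Implicit. Unset Printing Implicit Defensive.

(* Vertices of [n]_0 = {0,...,n} are ordinals 'I_n.+1.  A (rooted, increasing)
   forest is stored as a set of directed edges (parent, child). *)
Definition edge (n : nat) := ('I_n.+1 * 'I_n.+1)%type.
Definition pforest (n : nat) := {set edge n}.

Definition adj n (E : pforest n) : rel 'I_n.+1 :=
  fun x y => ((x, y) \in E) || ((y, x) \in E).
Definition same_comp n (E : pforest n) (x y : 'I_n.+1) : bool :=
  connect (adj E) x y.

(* Priority forest: every edge goes from a parent to a larger child
   (increasing trees; acyclicity follows), each vertex has at most one
   parent, and distinct components are ordered: all labels of one are
   smaller than all labels of the other. *)
Definition is_priority_forest n (E : pforest n) : Prop :=
  (forall e, e \in E -> e.1 < e.2) /\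
  (forall p p' c, (p, c) \in E -> (p', c) \in E -> p = p') /\
  (forall x y, ~~ same_comp E x y -> x < y ->
     forall x' y', same_comp E x x' -> same_comp E y y' -> x' < y').

Definition spm n (E : pforest n) (i : nat) : option nat :=
  if [pick e in E | val e.2 == i] is Some e then Some (val e.1).+1 else None.

Definition max_chain n (P : pforest n) (m : nat) (C : nat -> pforest n) : Prop :=
  C 0 = set0 /\ C m = P /\ (forall i, i <= m -> is_priority_forest (C i)) /\
  (forall i, 0 < i <= m -> exists e, e \notin C i.-1 /\ C i = e |: C i.-1).

Definition JH_perm n (C : nat -> pforest n) (m : nat) (lam : nat -> nat) : Prop :=
  forall i, 0 < i <= m ->
    exists e, e \notin C i.-1 /\ C i = e |: C i.-1 /\ lam i = maxn e.1 e.2.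

(* parking process: list of spots of cars 1..k (position j-1 = spot of car j),
   or None if some car fails to park among spots 1..n *)
Fixpoint park_seq (pi : nat -> nat) (n k : nat) : option (seq nat) :=
  match k with
  | 0 => Some [::]
  | k'.+1 =>
    match park_seq pi n k' with
    | None => None
    | Some occ =>
      match [seq s <- index_iota (pi k'.+1) n.+1 | s \notin occ] with
      | [::] => None
      | s :: _ => Some (rcons occ s)
      end
    end
  end.

Definition parking_function (m n : nat) (pi : nat -> nat) : Prop :=
  (forall i, 0 < i <= m -> 0 < pi i <= n) /\ park_seq pi n m <> None.

Definition birdseye (pi : nat -> nat) (m n s : nat) : option nat :=
  match park_seq pi n m with
  | Some occ => if (0 < s <= n) && (s \in occ) then Some (index s occ).+1 else None
  | None => None
  end.

(* the forest whose shifted parent map is pi o omega_pi: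
   edge (p, i) iff omega_pi(i) = c and pi(c) = p + 1 *)
Definition pf_of_parking (n m : nat) (pi : nat -> nat) : pforest n :=
  [set e : edge n | if birdseye pi m n e.2 is Some c then pi c == (val e.1).+1 else false].

From mathcomp Require Import all_boot.
From mathcomp Require Import zify.
Set Implicit Arguments. Unset Strict Implicit. Unset Printing Implicit Defensive.

(* Let the i-th cover of the chain add the edge (p, c), so that lambda(i) = c
   and car i prefers spot s_P(c) = p + 1.  The forest C_i is itself a priority
   forest containing (p, c), so every vertex v with p < v < c already has a
   parent in C_i, and hence in C_(i-1): spots p+1, ..., c-1 were taken by
   earlier cars, while spot c is still free because lambda is injective.  So
   car i parks at lambda(i), i.e. the bird's eye permutation is lambda^-1, and
   the parent of lambda(i) is read off from the preference p + 1 of car i. *)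

Lemma connect_lastP (T : finType) (e : rel T) x y :
  connect e x y -> x = y \/ exists2 z, connect e x z & e z y.
Proof.
case/connectP=> t; case/lastP: t => [|t z] /=; first by move=> _ ->; left.
rewrite rcons_path last_rcons => /andP[xt tz] ->; right.
by exists (last x t) => //; apply/connectP; exists t.
Qed.

Lemma first_free_spot (occ : seq nat) a b c :
  a <= c < b -> {in index_iota a c, forall v, v \in occ} -> c \notin occ ->
  [seq s <- index_iota a b | s \notin occ] =
    c :: [seq s <- index_iota c.+1 b | s \notin occ].
Proof.
move=> /andP[ac cb] occ_ac c_free.
have -> : index_iota a b = index_iota a c ++ c :: index_iota c.+1 b.
  rewrite /index_iota (_ : b - a = c - a + (b - c).-1.+1); last by lia.
  by rewrite iotaD subnKC // subnS.
rewrite filter_cat /= c_free (eq_in_filter (a2 := pred0)) ?filter_pred0 //.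
by move=> v /occ_ac ->.
Qed.

Definition edge_rel n (E : pforest n) : rel 'I_n.+1 := fun a b => (a, b) \in E.

Section PriorityForest.

Variables (n : nat) (E : pforest n).
Hypothesis forestE : is_priority_forest E.
Implicit Types (p c u v w x y : 'I_n.+1) (e : edge n).

Lemma edge_lt e : e \in E -> e.1 < e.2.
Proof. exact: forestE.1. Qed.

Lemma parent_uniq p p' c : (p, c) \in E -> (p', c) \in E -> p = p'.
Proof. exact: forestE.2.1. Qed.

Lemma edge_eq_child e e' : e \in E -> e' \in E -> e.2 = e'.2 -> e = e'.
Proof.
case: e e' => [p c] [p' c'] /= pc + cc'; rewrite -cc' => /(parent_uniq pc).
by move=> ->.
Qed.

Lemma connect_edge_le x y : connect (edge_rel E) x y -> x <= y.
Proof.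
case/connectP=> t; elim: t x => [|z t IH] x /=; first by move=> _ ->.
case/andP=> /edge_lt xz /IH zt /zt; exact/leq_trans/ltnW.
Qed.

(* Walking an undirected path away from a root, a backward edge (u, w) is the
   unique parent edge of w, which is the edge the directed walk arrived by. *)
Lemma connect_adj_from_root v w : (forall u, (u, v) \notin E) ->
  connect (adj E) v w -> connect (edge_rel E) v w.
Proof.
move=> root_v /connectP[t]; elim/last_ind: t w => [|t u IH] w /=.
  by move=> _ ->.
rewrite rcons_path last_rcons => /andP[vt xu] ->{w}.
have vx := IH _ vt erefl; set x := last v t in xu vx *.
case/orP: xu => [xu|ux]; first exact: connect_trans vx (connect1 xu).
have [xv|[z vz zx]] := connect_lastP vx.
  by have := root_v u; rewrite xv ux.
by rewrite (parent_uniq ux zx).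
Qed.

Lemma root_min v w : (forall u, (u, v) \notin E) -> same_comp E v w -> v <= w.
Proof. by move=> root_v /(connect_adj_from_root root_v)/connect_edge_le. Qed.

(* A parentless v is the least vertex of its tree, so p < v keeps it out of the
   tree of p and c, and no other tree can lie between p and c. *)
Lemma parent_between p c v :
  (p, c) \in E -> p < v < c -> exists u, (u, v) \in E.
Proof.
move=> pc /andP[pv vc].
case: (pickP (fun u => (u, v) \in E)) => [u uv|no_parent]; first by exists u.
have root_v u : (u, v) \notin E by rewrite no_parent.
have adj_sym : symmetric (adj E) by move=> x y; rewrite /adj orbC.
have [same_pv|] := boolP (same_comp E p v).
  have : same_comp E v p by rewrite /same_comp (sym_connect_sym adj_sym).
  by move/(root_min root_v); rewrite leqNgt pv.
move/forestE.2.2/(_ pv c v) => /(_ (connect1 _) (connect0 _ _)).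
by rewrite /adj pc ltnNge (ltnW vc) => /(_ erefl).
Qed.

Lemma spm_edge p c : (p, c) \in E -> spm E c = Some p.+1.
Proof.
move=> pc; rewrite /spm; case: pickP => [[p' c'] /andP[pc' /eqP /val_inj /= c'c]|].
  by rewrite c'c in pc'; rewrite (parent_uniq pc pc').
by move/(_ (p, c)); rewrite /= pc eqxx.
Qed.

End PriorityForest.

Section JordanHolderParking.

Variables (n m : nat) (P : pforest n) (C : nat -> pforest n) (lam : nat -> nat).
Hypothesis chainC : max_chain P m C.
Hypothesis JH_lam : JH_perm C m lam.

Let pi := fun i => odflt 0 (spm P (lam i)).
Let occ k := map lam (iota 1 k).

Lemma chain_forest i : i <= m -> is_priority_forest (C i).
Proof. exact: chainC.2.2.1. Qed.

Lemma forest_top : is_priority_forest P.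
Proof. by rewrite -chainC.2.1; apply: chain_forest. Qed.

Lemma chain_mono j k : j <= k <= m -> C j \subset C k.
Proof.
elim: k => [|k IH] /andP[jk km]; first by move: jk; rewrite leqn0 => /eqP->.
move: jk; rewrite leq_eqVlt => /orP[/eqP-> //|jk].
apply: subset_trans (IH _) _; first by rewrite -ltnS jk ltnW.
by have [e [_ ->]] := chainC.2.2.2 k.+1 km; apply: subsetUr.
Qed.

Lemma chain_cover i : 0 < i <= m ->
  exists e, [/\ e \notin C i.-1, C i = e |: C i.-1, e \in P & lam i = e.2].
Proof.
move=> im; have [e [eC [Ci lam_i]]] := JH_lam im.
have eCi : e \in C i by rewrite Ci setU11.
case/andP: im => _ im.
exists e; split=> //.
  by rewrite -chainC.2.1; apply: subsetP eCi; rewrite chain_mono // im leqnn.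
by rewrite lam_i; apply/maxn_idPr/ltnW/(edge_lt (chain_forest im)).
Qed.

Lemma chain_label k x : k <= m -> x \in C k -> exists2 j, 0 < j <= k & lam j = x.2.
Proof.
elim: k x => [|k IH] x km; first by rewrite chainC.1 inE.
have [e [_ -> _ lam_k]] := chain_cover (i := k.+1) km.
rewrite in_setU1 => /orP[/eqP-> | /(IH _ (ltnW km))[j /andP[j0 jk] lam_j]].
  by exists k.+1; rewrite ?leqnn.
by exists j; rewrite // j0 ltnW.
Qed.

Lemma lam_inj i j : 0 < i <= m -> 0 < j <= m -> lam i = lam j -> i = j.
Proof.
wlog ij : i j / i <= j => [wlog_ij|] im jm lam_ij.
  by case: (leqP i j) => [/wlog_ij|/ltnW/wlog_ij ji]; [apply | rewrite (ji jm im)].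
move: ij; rewrite leq_eqVlt => /orP[/eqP // | ij].
have [ei [_ Ci eiP lam_i]] := chain_cover im.
have [ej [ejC _ ejP lam_j]] := chain_cover jm.
have eij : ei = ej.
  by apply: (edge_eq_child forest_top) => //; apply: val_inj; rewrite /= -lam_i -lam_j.
case/negP: ejC; rewrite -eij; apply: subsetP (chain_mono (j := i) _) _ _.
  by lia.
by rewrite Ci setU11.
Qed.

Lemma lam_range i : 0 < i <= m -> 0 < lam i <= n.
Proof.
move=> /chain_cover[[p c] [_ _ /(edge_lt forest_top) /= pc ->]].
by have := ltn_ord c; lia.
Qed.

Lemma pref_parent i : 0 < i <= m -> exists2 e, e \in P & lam i = e.2 /\ pi i = e.1.+1.
Proof.
move=> /chain_cover[[p c] [_ _ pc lam_i]]; exists (p, c) => //.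
by rewrite /pi lam_i (spm_edge forest_top pc).
Qed.

Lemma pref_range i : 0 < i <= m -> 0 < pi i <= n.
Proof.
move=> /pref_parent[[p c] /(edge_lt forest_top) /= pc [_ ->]].
by have := ltn_ord c; lia.
Qed.

Lemma occupied_between k p c : k < m -> C k.+1 = (p, c) |: C k ->
  {in index_iota p.+1 c, forall v, v \in occ k}.
Proof.
move=> km Ck v; rewrite mem_index_iota => /andP[pv vc].
have vn : v < n.+1 by have := ltn_ord c; lia.
have pcC : (p, c) \in C k.+1 by rewrite Ck setU11.
have pvc : p < (inord v : 'I_n.+1) < c by rewrite inordK // pv.
have [u] := parent_between (chain_forest km) pcC pvc.
rewrite Ck in_setU1 => /orP[/eqP[_ /(congr1 val)] | uv].
  by rewrite /= inordK // => v_c; move: vc; rewrite v_c ltnn.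
have [j jk] := chain_label (ltnW km) uv; rewrite /= inordK // => lam_j.
by apply/mapP; exists j; rewrite // mem_iota; lia.
Qed.

Lemma lam_fresh k : k < m -> lam k.+1 \notin occ k.
Proof.
move=> km; apply/mapP => -[j]; rewrite mem_iota => jk lam_kj.
suff : k.+1 = j by lia.
by apply: lam_inj lam_kj; lia.
Qed.

Lemma park_seq_JH k : k <= m -> park_seq pi n k = Some (occ k).
Proof.
elim: k => [|k IH] km //.
rewrite [park_seq _ _ _.+1]/= IH; last exact: ltnW.
have [[p c] [_ Ck pcP lam_k]] := chain_cover (i := k.+1) km.
rewrite /pi lam_k (spm_edge forest_top pcP) /=.
rewrite (@first_free_spot _ _ _ c); first last.
- by rewrite -lam_k lam_fresh.
- exact: occupied_between km Ck.
- by rewrite (edge_lt forest_top pcP) ltn_ord.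
by rewrite /occ -[k.+1]addn1 iotaD map_cat cats1 add1n lam_k.
Qed.

Lemma index_lam i : 0 < i <= m -> index (lam i) (occ m) = i.-1.
Proof.
move=> im; have [i0 _] := andP im.
have occ_uniq : uniq (occ m).
  rewrite map_inj_in_uniq ?iota_uniq // => a b; rewrite !mem_iota => ha hb.
  by move=> lam_ab; apply: lam_inj lam_ab; lia.
have -> : lam i = nth 0 (occ m) i.-1.
  by rewrite (nth_map 0) ?size_iota ?nth_iota ?add1n ?prednK //; lia.
by rewrite index_uniq // size_map size_iota; lia.
Qed.

Lemma birdseye_JH s i : birdseye pi m n s = Some i <-> 0 < i <= m /\ lam i = s.
Proof.
rewrite /birdseye park_seq_JH //; split => [|[im <-]].
  case: ifP => // /andP[_ /mapP[j]]; rewrite mem_iota => jm -> [<-].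
  have {}jm : 0 < j <= m by lia.
  by case/andP: (jm) => j0 _; rewrite index_lam // prednK.
by rewrite lam_range // map_f ?mem_iota ?index_lam ?prednK //; lia.
Qed.

Lemma pf_of_parking_JH : pf_of_parking n m pi = P.
Proof.
apply/setP => -[a b]; rewrite inE /=; apply/idP/idP.
  case be: birdseye => [i|] //; have [im lam_i] := (birdseye_JH _ _).1 be.
  have [[p c] pcP [lam_c ->]] := pref_parent im.
  move=> /eqP[/val_inj <-]; suff -> : b = c by [].
  by apply: val_inj; rewrite /= -lam_i lam_c.
move=> abP; have abC : (a, b) \in C m by rewrite chainC.2.1.
have [j jm lam_j] := chain_label (leqnn m) abC.
by rewrite ((birdseye_JH b j).2 (conj jm lam_j)) /pi lam_j (spm_edge forest_top abP) /=.
Qed.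

End JordanHolderParking.

Theorem lemma4p2 (n m : nat) (P : pforest n) (C : nat -> pforest n) (lam : nat -> nat) :
  is_priority_forest P -> #|P| = m -> max_chain P m C -> JH_perm C m lam ->
  let pi := fun i => odflt 0 (spm P (lam i)) in
  parking_function m n pi /\ pf_of_parking n m pi = P /\
  (forall s, 0 < s <= n -> forall i,
     birdseye pi m n s = Some i <-> (0 < i <= m /\ lam i = s)).
Proof.
(* The first two hypotheses are implied by the chain: its top is P and it has m covers. *)
move=> _ _ chainC JH_lam pi.
split; [split|split].
- exact: pref_range chainC JH_lam.
- by rewrite (park_seq_JH chainC JH_lam (leqnn m)); discriminate.
- exact: pf_of_parking_JH chainC JH_lam.
- by move=> s _ i; apply: birdseye_JH chainC JH_lam s i.
Qed.
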